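(* There is a homotopy equivalence $$SU(2)\times SU(2)\setminus Hom(\mathbb Z\oplus\mathbb Z,SU(2))\ \simeq\ SO(3).$$
   Context: $Hom(\mathbb Z\oplus\mathbb Z,SU(2))$ is identified with the subspace of $SU(2)\times SU(2)$ consisting of ordered pairs of commuting elements; the left side is its complement in $SU(2)\times SU(2)$. *)

From HB Require Import structures.
From mathcomp Require Import all_boot all_order all_algebra.
From mathcomp Require Import all_classical all_reals all_analysis.
From mathcomp Require Import complex.
Import Order.TTheory GRing.Theory Num.Theory.
Import numFieldNormedType.Exports.


Unset Strict Implicit.
Unset Printing Implicit Defensive.

Local Open Scope ring_scope.
Local Open Scope classical_set_scope.

(* The complex numbers R[i] over a real field R : realType carry the metric
   topology of their norm |a + ib| = sqrt(a^2 + b^2) (the usual topology of C).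
   Matrices over R[i] then get the usual (entrywise / sup-norm) topology. *)
HB.instance Definition _ (R : realType) := PseudoPointedMetric.copy R[i] (R[i])^o.

Definition SU2 (R : realType) : set 'M[R[i]]_2 :=
  [set U | (map_mx Num.conj U)^T *m U = 1%:M /\ \det U = 1].

Definition SO3 (R : realType) : set 'M[R]_3 :=
  [set M | M^T *m M = 1%:M /\ \det M = 1].

(* Hom(Z + Z, SU(2)) identified with the pairs of commuting elements of SU(2)^2 *)
Definition HomZ2SU2 (R : realType) : set ('M[R[i]]_2 * 'M[R[i]]_2) :=
  [set p | @SU2 R p.1 /\ @SU2 R p.2 /\ p.1 *m p.2 = p.2 *m p.1].

Definition SU2xSU2 (R : realType) : set ('M[R[i]]_2 * 'M[R[i]]_2) :=
  [set p | @SU2 R p.1 /\ @SU2 R p.2].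

Definition homotopic_on (R : realType) {X Y : topologicalType}
    (A : set X) (B : set Y) (f g : X -> Y) : Prop :=
  exists H : R * X -> Y,
    [/\ {within `[0, 1] `*` A, continuous H},
        (forall t x, `[0, 1] t -> A x -> B (H (t, x))),
        (forall x, A x -> H (0, x) = f x) &
        (forall x, A x -> H (1, x) = g x)].

Definition homotopy_equivalent (R : realType) {X Y : topologicalType}
    (A : set X) (B : set Y) : Prop :=
  exists (f : X -> Y) (g : Y -> X),
    [/\ {within A, continuous f}, f @` A `<=` B,
        {within B, continuous g}, g @` B `<=` A &
        homotopic_on R A A (g \o f) id /\ homotopic_on R B B (f \o g) id].

From HB Require Import structures.
From mathcomp Require Import all_boot all_order all_algebra.
From mathcomp Require Import all_classical all_reals all_analysis.
From mathcomp Require Import complex.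
From mathcomp Require Import ring lra.
Import Order.TTheory GRing.Theory Num.Theory.
Import numFieldNormedType.Exports.
Local Open Scope ring_scope.
Local Open Scope classical_set_scope.

(* An element of SU(2) is a unit quaternion x0 + x with x in R^3, and two of
   them commute iff the cross product a x b of their imaginary parts vanishes.
   A non-commuting pair therefore yields the orthonormal frame (u, w x u, w),
   with u = a/|a| and w = (a x b)/|a x b|, which is a rotation; a rotation
   yields the pair of pure quaternions given by its first two columns, whose
   cross product is the third column.  Rotation -> pair -> rotation is the
   identity.  Pair -> rotation -> pair is homotopic to the identity through the
   normalised straight lines from u to U and from w x u to V: along them the
   cross product of the imaginary parts stays a positive multiple of a x b, so
   the pairs never commute. *)

Set Implicit Arguments.
Unset Strict Implicit.

Section Vec3.
Variable R : rcfType.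
Local Notation vec := (R * R * R)%type.
Implicit Types (u v w : vec) (k : R).

Definition dot u v := u.1.1 * v.1.1 + u.1.2 * v.1.2 + u.2 * v.2.

Definition cross u v : vec :=
  (u.1.2 * v.2 - u.2 * v.1.2, u.2 * v.1.1 - u.1.1 * v.2, u.1.1 * v.1.2 - u.1.2 * v.1.1).

Definition normalize u := (Num.sqrt (dot u u))^-1 *: u.

Lemma scaleRE k (x : R) : k *: x = k * x.
Proof. by []. Qed.

Lemma vec3_eq u v : u.1.1 = v.1.1 -> u.1.2 = v.1.2 -> u.2 = v.2 -> u = v.
Proof. by case: u => [[? ?] ?]; case: v => [[? ?] ?] /= -> -> ->. Qed.

Ltac vec3_ring :=
  repeat match goal with u : vec |- _ => case: u => [[? ?] ?] end;
  rewrite /dot /cross; try apply: vec3_eq; rewrite /= ?scaleRE; ring.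

Lemma crossC u v : cross v u = - cross u v.
Proof. vec3_ring. Qed.

Lemma crossNl u v : cross (- u) v = - cross u v.
Proof. vec3_ring. Qed.

Lemma crossxx u : cross u u = 0.
Proof. vec3_ring. Qed.

Lemma crossDr u v w : cross u (v + w) = cross u v + cross u w.
Proof. vec3_ring. Qed.

Lemma crossZl k u v : cross (k *: u) v = k *: cross u v.
Proof. vec3_ring. Qed.

Lemma crossZr k u v : cross u (k *: v) = k *: cross u v.
Proof. vec3_ring. Qed.

Lemma cross0l v : cross 0 v = 0.
Proof. by rewrite -(scale0r (0 : vec)) crossZl !scale0r. Qed.

Lemma cross_neq0 u v : cross u v != 0 -> u != 0 /\ v != 0.
Proof.
move=> c0; split; apply: contraNneq c0 => ->; first by rewrite cross0l.
by rewrite crossC cross0l oppr0.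
Qed.

Lemma dotC u v : dot u v = dot v u.
Proof. vec3_ring. Qed.

Lemma dotNl u v : dot (- u) v = - dot u v.
Proof. vec3_ring. Qed.

Lemma dotZl k u v : dot (k *: u) v = k * dot u v.
Proof. vec3_ring. Qed.

Lemma dotZr k u v : dot u (k *: v) = k * dot u v.
Proof. vec3_ring. Qed.

Lemma dotBB u v : dot (u - v) (u - v) = dot u u - 2 * dot u v + dot v v.
Proof. vec3_ring. Qed.

Lemma dot_ge0 u : 0 <= dot u u.
Proof. by rewrite /dot -!expr2 !addr_ge0 ?sqr_ge0. Qed.

Lemma dot_eq0 u : (dot u u == 0) = (u == 0).
Proof.
case: u => [[x1 x2] x3]; have -> : 0 = (0, 0, 0) :> vec by [].
by rewrite /dot /= -!expr2 !xpair_eqE !paddr_eq0 ?addr_ge0 ?sqr_ge0 // !sqrf_eq0.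
Qed.

Lemma dot_crossl u v : dot u (cross u v) = 0.
Proof. vec3_ring. Qed.

Lemma dot_crossr u v : dot v (cross u v) = 0.
Proof. vec3_ring. Qed.

Lemma dot_cross u v : dot (cross u v) (cross u v) = dot u u * dot v v - dot u v ^+ 2.
Proof. vec3_ring. Qed.

Lemma dot_cross_orthonormal u v : dot u u = 1 -> dot v v = 1 -> dot u v = 0 ->
  dot (cross u v) (cross u v) = 1.
Proof. by move=> uu vv uv; rewrite dot_cross uu vv uv expr0n /= subr0 mulr1. Qed.

Lemma cross_cross u v w : cross u (cross v w) = dot u w *: v - dot u v *: w.
Proof. vec3_ring. Qed.

Lemma dot_normalize u : u != 0 -> dot (normalize u) (normalize u) = 1.
Proof.
rewrite -dot_eq0 => u0; have u_gt0 : 0 < dot u u by rewrite lt_def u0 dot_ge0.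
rewrite /normalize dotZl dotC dotZl mulrA -expr2 exprVn sqr_sqrtr ?dot_ge0 //.
by rewrite mulVf.
Qed.

Lemma normalize_id u : dot u u = 1 -> normalize u = u.
Proof. by move=> u1; rewrite /normalize u1 sqrtr1 invr1 scale1r. Qed.

Lemma convex_comb_gt0 (t z : R) : 0 <= t <= 1 -> 0 < z -> 0 < t + (1 - t) * z.
Proof.
case/andP=> t0 t1 z0; have tz : 0 <= (1 - t) * z by rewrite mulr_ge0 ?subr_ge0 // ltW.
rewrite le_eqVlt in t0; case/orP: t0 => [/eqP <-|t_gt0]; last by lra.
by rewrite add0r subr0 mul1r.
Qed.

Lemma cross_frame_path_neq0 a b t : cross a b != 0 -> 0 <= t <= 1 ->
  cross (t *: a + (1 - t) *: normalize a)
        (t *: b + (1 - t) *: cross (normalize (cross a b)) (normalize a)) != 0.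
Proof.
move=> c0 t01; set u := normalize a; set c := cross a b in c0 *; set w := normalize c.
have [a0 _] := cross_neq0 c0.
set na := Num.sqrt (dot a a); set nc := Num.sqrt (dot c c).
have na_gt0 : 0 < na by rewrite sqrtr_gt0 lt_def dot_eq0 a0 dot_ge0.
have nc_gt0 : 0 < nc by rewrite sqrtr_gt0 lt_def dot_eq0 c0 dot_ge0.
have -> : t *: a + (1 - t) *: u = (t + (1 - t) * na^-1) *: a.
  by rewrite /u /normalize -/na scalerA scalerDl.
(* [a . w = 0], so [a x (w x u) = (a . u) w = |a| w] is a positive multiple of [c]. *)
have cross_a_wu : cross a (cross w u) = (na / nc) *: c.
  rewrite cross_cross /w /u /normalize -/na -/nc !dotZr dot_crossl mulr0 scale0r subr0.
  rewrite scalerA -[dot a a](sqr_sqrtr (dot_ge0 a)) -/na.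
  by rewrite expr2 mulrA mulVf ?gt_eqF // mul1r.
rewrite crossZl crossDr (crossZr t) (crossZr (1 - t)) cross_a_wu scalerA -scalerDl scalerA.
rewrite scaler_eq0 negb_or c0 andbT mulf_neq0 ?gt_eqF //.
  by rewrite convex_comb_gt0 // invr_gt0.
by rewrite convex_comb_gt0 // divr_gt0.
Qed.

End Vec3.

Lemma ord2P (i : 'I_2) : i = 0 \/ i = 1.
Proof. by case: i => [[|[|//]] ?]; [left|right]; apply: val_inj. Qed.

Lemma ord3P (i : 'I_3) : [\/ i = 0, i = 1 | i = 2].
Proof. by case: i => [[|[|[|//]]] ?]; [constructor 1|constructor 2|constructor 3]; apply: val_inj. Qed.

Section Rotations.
Variable R : realType.
Local Notation vec := (R * R * R)%type.
Implicit Types (u v w : vec) (M : 'M[R]_3).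

Definition mx_col3 M (j : 'I_3) : vec := (M 0 j, M 1 j, M 2 j).

Definition mx_of_cols3 u v w : 'M[R]_3 :=
  \matrix_(i < 3, j < 3)
    nth 0 (nth [::] [:: [:: u.1.1; v.1.1; w.1.1]; [:: u.1.2; v.1.2; w.1.2];
                        [:: u.2; v.2; w.2]] i) j.

Lemma mx_col3_of_cols u v w :
  [/\ mx_col3 (mx_of_cols3 u v w) 0 = u, mx_col3 (mx_of_cols3 u v w) 1 = v
    & mx_col3 (mx_of_cols3 u v w) 2 = w].
Proof. by rewrite /mx_col3 !mxE /=; split; [case: u => [[]] | case: v => [[]] | case: w => [[]]]. Qed.

Lemma mx_of_col3K M : mx_of_cols3 (mx_col3 M 0) (mx_col3 M 1) (mx_col3 M 2) = M.
Proof. by apply/matrixP => i j; rewrite mxE; case: (ord3P i) => ->; case: (ord3P j) => ->. Qed.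

Lemma trmx_mul_col3 M i j : (M^T *m M) i j = dot (mx_col3 M i) (mx_col3 M j).
Proof.
have lift1 : lift ord0 ord0 = 1 :> 'I_3 by apply: val_inj.
have lift2 : lift ord0 (lift ord0 ord0) = 2 :> 'I_3 by apply: val_inj.
by rewrite !mxE !big_ord_recl big_ord0 addr0 /dot /= !mxE addrA lift1 lift2.
Qed.

Lemma det_mx3 M : \det M = dot (cross (mx_col3 M 0) (mx_col3 M 1)) (mx_col3 M 2).
Proof.
pose F (i j : nat) := M (inord i) (inord j).
have -> : M = \matrix_(i, j) F i j by apply/matrixP => i j; rewrite mxE /F !inord_val.
rewrite (expand_det_row _ ord0) !big_ord_recl big_ord0 /cofactor.
rewrite !(expand_det_row _ ord0) !big_ord_recl !big_ord0 /cofactor !det_mx11 !mxE.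
by rewrite /dot /cross /= !mxE /bump /=; ring.
Qed.

Lemma SO3P M : SO3 R M <->
  [/\ dot (mx_col3 M 0) (mx_col3 M 0) = 1, dot (mx_col3 M 1) (mx_col3 M 1) = 1,
      dot (mx_col3 M 0) (mx_col3 M 1) = 0 & mx_col3 M 2 = cross (mx_col3 M 0) (mx_col3 M 1)].
Proof.
rewrite /SO3 /= det_mx3; set c0 := mx_col3 M 0; set c1 := mx_col3 M 1; set c2 := mx_col3 M 2.
split.
- case=> /matrixP orth det1.
  have dotE i j : dot (mx_col3 M i) (mx_col3 M j) = (i == j)%:R.
    by rewrite -trmx_mul_col3 orth mxE.
  have n0 := dotE 0 0; have n1 := dotE 1 1; have n2 := dotE 2 2; have o01 := dotE 0 1.
  rewrite /= -/c0 -/c1 -/c2 in n0 n1 n2 o01; split => //.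
  apply/eqP; rewrite -subr_eq0 -dot_eq0 dotBB (dotC c2) det1 dot_cross_orthonormal // n2.
  by apply/eqP; lra.
- case=> n0 n1 o01 c2E; have n2 := dot_cross_orthonormal n0 n1 o01.
  split; last by rewrite c2E.
  apply/matrixP => i j; rewrite trmx_mul_col3 mxE.
  case: (ord3P i) => ->; case: (ord3P j) => ->;
    rewrite /= -/c0 -/c1 -/c2 ?c2E ?n2 ?dot_crossl ?dot_crossr //;
    by rewrite dotC ?o01 ?dot_crossl ?dot_crossr.
Qed.

Lemma SO3_mx_of_cols3 u w : dot u u = 1 -> dot w w = 1 -> dot u w = 0 ->
  SO3 R (mx_of_cols3 u (cross w u) w).
Proof.
move=> uu ww uw; apply/SO3P; have [-> -> ->] := mx_col3_of_cols u (cross w u) w.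
split; first by [].
- by rewrite dot_cross_orthonormal // dotC.
- exact: dot_crossr.
- by rewrite cross_cross uu uw scale1r scale0r subr0.
Qed.

Definition frame3 a b : 'M[R]_3 :=
  let u := normalize a in let w := normalize (cross a b) in mx_of_cols3 u (cross w u) w.

Lemma SO3_frame3 a b : cross a b != 0 -> SO3 R (frame3 a b).
Proof.
move=> c0; have [a0 _] := cross_neq0 c0.
apply: SO3_mx_of_cols3; rewrite ?dot_normalize //.
by rewrite /normalize dotZl dotZr dot_crossl !mulr0.
Qed.

Lemma frame3_cols M : SO3 R M -> frame3 (mx_col3 M 0) (mx_col3 M 1) = M.
Proof.
case/SO3P=> n0 n1 o01 c2E; rewrite /frame3 -c2E.
have n2 : dot (mx_col3 M 2) (mx_col3 M 2) = 1 by rewrite c2E dot_cross_orthonormal.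
rewrite !normalize_id // {1}c2E crossC cross_cross n0 o01 scale0r scale1r sub0r opprK.
exact: mx_of_col3K.
Qed.

End Rotations.

Section Quaternions.
Variable R : realType.
Local Notation C := R[i].
Local Notation vec := (R * R * R)%type.
Implicit Types (x y : vec) (U : 'M[C]_2).

Definition quat_mx (x0 : R) x : 'M[C]_2 :=
  \matrix_(i, j)
    if val i == 0%N then (if val j == 0%N then x0 +i* x.1.1 else x.1.2 +i* x.2)%C
    else (if val j == 0%N then (- x.1.2) +i* x.2 else x0 +i* (- x.1.1))%C.

Definition quat_re U : R := complex.Re (U 0 0).

Definition quat_im U : vec := (complex.Im (U 0 0), complex.Re (U 0 1), complex.Im (U 0 1)).

Ltac mx2_ring :=
  apply/matrixP => -[[|[|//]] ?] [[|[|//]] ?];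
  rewrite !mxE ?big_ord_recl ?big_ord0 ?mxE /=;
  apply/eqP; rewrite eq_complex /= ?scaleRE; apply/andP; split; apply/eqP; ring.

Lemma quat_mxM (x0 y0 : R) x y :
  quat_mx x0 x *m quat_mx y0 y = quat_mx (x0 * y0 - dot x y) (x0 *: y + y0 *: x + cross x y).
Proof. case: x => [[x1 x2] x3]; case: y => [[y1 y2] y3]; rewrite /dot /cross; mx2_ring. Qed.

Lemma quat_mx_adj (x0 : R) x : (map_mx Num.conj (quat_mx x0 x))^T = quat_mx x0 (- x).
Proof. case: x => [[x1 x2] x3]; mx2_ring. Qed.

Lemma quat_mx1 : quat_mx 1 0 = 1%:M.
Proof. mx2_ring. Qed.

Lemma quat_mxK (x0 : R) x : quat_re (quat_mx x0 x) = x0 /\ quat_im (quat_mx x0 x) = x.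
Proof. by case: x => [[x1 x2] x3]; rewrite /quat_re /quat_im !mxE. Qed.

Lemma quat_mx_inj (x0 y0 : R) x y : quat_mx x0 x = quat_mx y0 y -> x0 = y0 /\ x = y.
Proof.
move=> E; have [re_x im_x] := quat_mxK x0 x; have [re_y im_y] := quat_mxK y0 y.
by split; [rewrite -re_x E re_y | rewrite -im_x E im_y].
Qed.

Lemma det_mx2 (K : comPzRingType) (U : 'M[K]_2) : \det U = U 0 0 * U 1 1 - U 0 1 * U 1 0.
Proof.
rewrite (expand_det_row _ ord0) !big_ord_recl big_ord0 /cofactor !det_mx11 !mxE /=.
rewrite expr0 expr1 mul1r mulN1r addr0 mulrN.
by congr (_ * U _ _ - U _ _ * U _ _); apply: val_inj.
Qed.

Lemma SU2_quat_mx (x0 : R) x : x0 ^+ 2 + dot x x = 1 -> SU2 R (quat_mx x0 x).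
Proof.
move=> n1; split.
  rewrite quat_mx_adj quat_mxM -quat_mx1 dotNl crossNl crossxx scalerN subrr add0r oppr0.
  by rewrite opprK -expr2 n1.
rewrite det_mx2 !mxE /=; apply/eqP; rewrite eq_complex /=.
by rewrite -n1 /dot; apply/andP; split; apply/eqP; ring.
Qed.

Lemma SU2_quatP U : SU2 R U ->
  U = quat_mx (quat_re U) (quat_im U) /\ quat_re U ^+ 2 + dot (quat_im U) (quat_im U) = 1.
Proof.
case=> UU det1.
(* [U^* U = 1] and [\adj U *m U = \det U = 1]: both [U^*] and [\adj U] invert [U]. *)
have Uu : U \in unitmx by rewrite unitmxE det1 unitr1.
have adjE : (map_mx Num.conj U)^T = \adj U.
  by apply: (can_inj (mulmxK Uu)); rewrite /= UU mul_adj_mx det1.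
have := congr1 (fun M : 'M[C]_2 => M 0 0) adjE.
have := congr1 (fun M : 'M[C]_2 => M 1 0) adjE.
have l01 : lift 0 0 = 1 :> 'I_2 by apply: val_inj.
have l10 : lift 1 0 = 0 :> 'I_2 by apply: val_inj.
rewrite !mxE /cofactor !det_mx11 !mxE /= l01 l10 expr0 expr1 mul1r mulN1r => c_conj d_conj.
have {}c_conj : U 1 0 = - (U 0 1)^* by rewrite c_conj opprK.
rewrite det_mx2 -d_conj c_conj in det1; rewrite /quat_re /quat_im /dot /=; split.
  apply/matrixP => i j; case: (ord2P i) => ->; case: (ord2P j) => ->; rewrite !mxE /=.
  - by case: (U 0 0).
  - by case: (U 0 1).
  - by rewrite c_conj; case: (U 0 1) => b1 b2; apply/eqP; rewrite eq_complex /= opprK !eqxx.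
  - by rewrite -d_conj; case: (U 0 0).
move: det1; case: (U 0 0) => a1 a2; case: (U 0 1) => b1 b2.
by move/eqP; rewrite eq_complex /= => /andP [/eqP <- _]; ring.
Qed.

Lemma quat_mx_commP (x0 y0 : R) x y :
  quat_mx x0 x *m quat_mx y0 y = quat_mx y0 y *m quat_mx x0 x <-> cross x y = 0.
Proof.
(* The two products differ only in the sign of the [cross x y] term. *)
rewrite !quat_mxM (mulrC y0) (dotC y) (addrC (y0 *: x)) (crossC x y); split.
  case/quat_mx_inj=> _ /addrI /eqP; rewrite -subr_eq0 opprK -mulr2n -scaler_nat.
  by rewrite scaler_eq0 pnatr_eq0 => /eqP.
by move=> ->; rewrite oppr0.
Qed.

Lemma noncommuting_pairsP p : (SU2xSU2 R `\` HomZ2SU2 R) p <->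
  [/\ SU2 R p.1, SU2 R p.2 & cross (quat_im p.1) (quat_im p.2) != 0].
Proof.
have commE : SU2 R p.1 -> SU2 R p.2 ->
    p.1 *m p.2 = p.2 *m p.1 <-> cross (quat_im p.1) (quat_im p.2) = 0.
  move=> /SU2_quatP[E1 _] /SU2_quatP[E2 _].
  by rewrite -(quat_mx_commP (quat_re p.1) (quat_re p.2)) -E1 -E2.
split.
  by case=> -[s1 s2] nH; split => //; apply/eqP => /(commE s1 s2) c; apply: nH.
by case=> s1 s2 /eqP c0; split => // -[_ [_ /(commE s1 s2)]].
Qed.

Definition quat_unit (x0 : R) x : 'M[C]_2 :=
  let n := Num.sqrt (x0 ^+ 2 + dot x x) in quat_mx (x0 / n) (n^-1 *: x).

Lemma quat_unit_id (x0 : R) x : x0 ^+ 2 + dot x x = 1 -> quat_unit x0 x = quat_mx x0 x.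
Proof. by move=> n1; rewrite /quat_unit n1 sqrtr1 invr1 mulr1 scale1r. Qed.

Lemma quat_unit_norm_gt0 (x0 : R) x : x != 0 -> 0 < Num.sqrt (x0 ^+ 2 + dot x x).
Proof.
rewrite -dot_eq0 => x_neq0; rewrite sqrtr_gt0 ltr_pwDr ?sqr_ge0 //.
by rewrite lt_def x_neq0 dot_ge0.
Qed.

Lemma SU2_quat_unit (x0 : R) x : x != 0 -> SU2 R (quat_unit x0 x).
Proof.
move=> /(quat_unit_norm_gt0 x0); rewrite /quat_unit; set n := Num.sqrt _ => n_gt0.
apply: SU2_quat_mx.
have n2 : n ^+ 2 = x0 ^+ 2 + dot x x by rewrite sqr_sqrtr // addr_ge0 ?sqr_ge0 ?dot_ge0.
clearbody n.
rewrite dotZl dotZr expr_div_n mulrA -expr2 exprVn (mulrC _ (dot x x)) -mulrDl -n2.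
by rewrite divff // sqrf_eq0 gt_eqF.
Qed.

Lemma quat_unit_noncommuting (x0 y0 : R) x y : cross x y != 0 ->
  (SU2xSU2 R `\` HomZ2SU2 R) (quat_unit x0 x, quat_unit y0 y).
Proof.
move=> c0; have [x_neq0 y_neq0] := cross_neq0 c0.
apply/noncommuting_pairsP; split; [exact: SU2_quat_unit | exact: SU2_quat_unit |] => /=.
have /quat_unit_norm_gt0/gt_eqF nx := x_neq0; have /quat_unit_norm_gt0/gt_eqF ny := y_neq0.
rewrite /quat_unit !(quat_mxK _ _).2 crossZl crossZr scalerA scaler_eq0 negb_or c0 andbT.
by rewrite mulf_neq0 ?invr_eq0 ?nx ?ny.
Qed.

End Quaternions.

Section Continuity.
Variable R : realType.
Local Notation C := R[i].
Local Notation vec := (R * R * R)%type.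

Lemma normc_lt_ReIm (w : C) (e : R) :
  `|w| < e%:C%C -> `|complex.Re w| < e /\ `|complex.Im w| < e.
Proof.
case: w => a b; rewrite normc_def /= ltcR => lt_e.
split; apply: le_lt_trans lt_e; rewrite -sqrtr_sqr ler_sqrt ?addr_ge0 ?sqr_ge0 //.
  by rewrite lerDl sqr_ge0.
by rewrite lerDr sqr_ge0.
Qed.

Lemma continuous_Re : continuous (@complex.Re R).
Proof.
move=> z P /= /nbhs_ballP[e e_gt0 sP]; apply/nbhs_ballP; exists e%:C%C; first by rewrite /= ltcR.
by move=> w /normc_lt_ReIm[+ _] => ?; apply: sP; rewrite /ball /= -raddfB.
Qed.

Lemma continuous_Im : continuous (@complex.Im R).
Proof.
move=> z P /= /nbhs_ballP[e e_gt0 sP]; apply/nbhs_ballP; exists e%:C%C; first by rewrite /= ltcR.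
by move=> w /normc_lt_ReIm[_ +] => ?; apply: sP; rewrite /ball /= -raddfB.
Qed.

Lemma cvg_complex (T : topologicalType) (f g : T -> R) (z : T) :
  {for z, continuous f} -> {for z, continuous g} ->
  {for z, continuous (fun y => (f y +i* g y)%C)}.
Proof.
move=> cf cg P /= /nbhs_ballP[eps eps_gt0 sP].
have : (0 : C) < eps by exact: eps_gt0.
case: eps {eps_gt0} sP => e e' sP; rewrite ltcE /= => /andP[/eqP e'0 e_gt0]; subst e'.
have e2_gt0 : 0 < e / 2 by rewrite divr_gt0.
have near_f : nbhs z (f @^-1` ball (f z) (e / 2)) by apply: cf; apply: nbhsx_ballx.
have near_g : nbhs z (g @^-1` ball (g z) (e / 2)) by apply: cg; apply: nbhsx_ballx.
apply: filterS (filterI near_f near_g) => y [fy gy]; apply: sP; move: fy gy.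
rewrite /ball /= normc_def /= ltcR => fy gy.
rewrite -(gtr0_norm e_gt0) -sqrtr_sqr ltr_sqrt ?exprn_gt0 //.
by move: fy gy; rewrite !ltr_norml; nra.
Qed.

Lemma continuous_mx_entry (K : topologicalType) m n i j :
  continuous (fun M : 'M[K]_(m, n) => M i j).
Proof.
move=> M A MA; exists (fun i' j' => if (i' == i) && (j' == j) then A else setT).
  by move=> i' j'; case: ifP => [/andP[/eqP -> /eqP ->] //|_]; exact: filterT.
by move=> N /(_ i j); rewrite !eqxx.
Qed.

Lemma cvg_mx_entrywise (T K : topologicalType) m n (F : T -> 'M[K]_(m, n)) z :
  (forall i j, {for z, continuous (fun y => F y i j)}) -> {for z, continuous F}.
Proof.
move=> cF A [P PF sPA].
have : \forall y \near z, forall i j, P i j (F y i j).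
  by do 2!apply: filter_forall => ?; apply: cF.
by apply: filterS => y Fy; apply: sPA.
Qed.

Lemma cvg_matrix (T K : topologicalType) m n (E : T -> 'I_m -> 'I_n -> K) z :
  (forall i j, {for z, continuous (fun y => E y i j)}) ->
  {for z, continuous (fun y => \matrix_(i, j) E y i j)}.
Proof.
move=> cE; apply: cvg_mx_entrywise => i j.
suff -> : (fun y => (\matrix_(i, j) E y i j) i j) = (fun y => E y i j) by apply: cE.
by apply/funext => y; rewrite mxE.
Qed.

Lemma continuous_fst (U V : topologicalType) : continuous (@fst U V).
Proof. by move=> ?; exact: cvg_fst. Qed.

Lemma continuous_snd (U V : topologicalType) : continuous (@snd U V).
Proof. by move=> ?; exact: cvg_snd. Qed.

Lemma cvg_vec3P (T : topologicalType) (u : T -> vec) z :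
  {for z, continuous u} <->
  [/\ {for z, continuous (fun y => (u y).1.1)}, {for z, continuous (fun y => (u y).1.2)}
    & {for z, continuous (fun y => (u y).2)}].
Proof.
split=> [cu | [c1 c2 c3]]; last first.
  have -> : u = fun y => ((u y).1.1, (u y).1.2, (u y).2).
    by apply/funext => y; case: (u y) => [[]].
  exact: cvg_pair (cvg_pair c1 c2) c3.
split.
- exact: continuous_comp (continuous_comp cu (@continuous_fst _ _ _)) (@continuous_fst _ _ _).
- exact: continuous_comp (continuous_comp cu (@continuous_fst _ _ _)) (@continuous_snd _ _ _).
- exact: continuous_comp cu (@continuous_snd _ _ _).
Qed.

Lemma continuous_quat_re : continuous (@quat_re R).
Proof. by move=> U; apply: continuous_comp (@continuous_mx_entry C 2 2 0 0 U) (@continuous_Re _). Qed.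

Lemma continuous_quat_im : continuous (@quat_im R).
Proof.
move=> U; apply/cvg_vec3P; rewrite /quat_im /=; split.
- exact: continuous_comp (@continuous_mx_entry C 2 2 0 0 U) (@continuous_Im _).
- exact: continuous_comp (@continuous_mx_entry C 2 2 0 1 U) (@continuous_Re _).
- exact: continuous_comp (@continuous_mx_entry C 2 2 0 1 U) (@continuous_Im _).
Qed.

Section PointwiseContinuity.
Variables (T : topologicalType) (z : T).
Implicit Types (f : T -> R) (u v : T -> vec).

Lemma cvg_dot u v : {for z, continuous u} -> {for z, continuous v} ->
  {for z, continuous (fun y => dot (u y) (v y))}.
Proof.
move=> /cvg_vec3P[u1 u2 u3] /cvg_vec3P[v1 v2 v3].
exact: cvgD (cvgD (cvgM u1 v1) (cvgM u2 v2)) (cvgM u3 v3).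
Qed.

Lemma cvg_cross u v : {for z, continuous u} -> {for z, continuous v} ->
  {for z, continuous (fun y => cross (u y) (v y))}.
Proof.
move=> /cvg_vec3P[u1 u2 u3] /cvg_vec3P[v1 v2 v3]; apply/cvg_vec3P; split.
- exact: cvgB (cvgM u2 v3) (cvgM u3 v2).
- exact: cvgB (cvgM u3 v1) (cvgM u1 v3).
- exact: cvgB (cvgM u1 v2) (cvgM u2 v1).
Qed.

Lemma cvg_normalize u : {for z, continuous u} -> u z != 0 ->
  {for z, continuous (fun y => normalize (u y))}.
Proof.
move=> cu; rewrite -dot_eq0 => uz.
have n0 : Num.sqrt (dot (u z) (u z)) != 0 by rewrite sqrtr_eq0 -ltNge lt_def uz dot_ge0.
exact: cvgZ (cvgV n0 (continuous_comp (cvg_dot cu cu) (@sqrt_continuous R _))) cu.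
Qed.

Lemma cvg_quat_mx f u : {for z, continuous f} -> {for z, continuous u} ->
  {for z, continuous (fun y => quat_mx (f y) (u y))}.
Proof.
move=> cf /cvg_vec3P[u1 u2 u3]; apply: cvg_matrix => -[[|[|//]] ?] [[|[|//]] ?] /=.
- exact: cvg_complex.
- exact: cvg_complex.
- exact: cvg_complex (cvgN u2) u3.
- exact: cvg_complex cf (cvgN u1).
Qed.

Lemma cvg_quat_unit f u : {for z, continuous f} -> {for z, continuous u} -> u z != 0 ->
  {for z, continuous (fun y => quat_unit (f y) (u y))}.
Proof.
move=> cf cu /(quat_unit_norm_gt0 (f z))/lt0r_neq0 nz.
have cn : {for z, continuous (fun y => Num.sqrt (f y ^+ 2 + dot (u y) (u y)))}.
  exact: continuous_comp (cvgD (cvgM cf cf) (cvg_dot cu cu)) (@sqrt_continuous R _).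
exact: cvg_quat_mx (cvgM cf (cvgV nz cn)) (cvgZ (cvgV nz cn) cu).
Qed.

Lemma cvg_mx_of_cols3 u v w : {for z, continuous u} -> {for z, continuous v} ->
  {for z, continuous w} -> {for z, continuous (fun y => mx_of_cols3 (u y) (v y) (w y))}.
Proof.
move=> /cvg_vec3P[u1 u2 u3] /cvg_vec3P[v1 v2 v3] /cvg_vec3P[w1 w2 w3].
by apply: cvg_matrix => -[[|[|[|//]]] ?] [[|[|[|//]]] ?].
Qed.

Lemma cvg_frame3 u v : {for z, continuous u} -> {for z, continuous v} ->
  cross (u z) (v z) != 0 -> {for z, continuous (fun y => frame3 (u y) (v y))}.
Proof.
move=> cu cv c0; have [u0 _] := cross_neq0 c0.
have cw := cvg_normalize (cvg_cross cu cv) c0; have cn := cvg_normalize cu u0.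
exact: cvg_mx_of_cols3 cn (cvg_cross cw cn) cw.
Qed.

End PointwiseContinuity.

End Continuity.

Section HomotopyEquivalence.
Variable R : realType.
Local Notation C := R[i].
Local Notation X := ('M[C]_2 * 'M[C]_2)%type.
Local Notation noncommuting := (SU2xSU2 R `\` HomZ2SU2 R).

Definition frame_of_pair (p : X) : 'M[R]_3 := frame3 (quat_im p.1) (quat_im p.2).

Definition pair_of_frame (M : 'M[R]_3) : X := (quat_mx 0 (mx_col3 M 0), quat_mx 0 (mx_col3 M 1)).

Definition pair_homotopy (tp : R * X) : X :=
  let t := tp.1 in let a := quat_im tp.2.1 in let b := quat_im tp.2.2 in
  let u := normalize a in let w := normalize (cross a b) in
  (quat_unit (t * quat_re tp.2.1) (t *: a + (1 - t) *: u),
   quat_unit (t * quat_re tp.2.2) (t *: b + (1 - t) *: cross w u)).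

Lemma frame_of_pair_SO3 p : noncommuting p -> SO3 R (frame_of_pair p).
Proof. by case/noncommuting_pairsP => _ _; apply: SO3_frame3. Qed.

Lemma pair_of_frame_noncommuting M : SO3 R M -> noncommuting (pair_of_frame M).
Proof.
case/SO3P=> n0 n1 o01 _; apply/noncommuting_pairsP; rewrite /= !(quat_mxK _ _).2.
split; try by apply: SU2_quat_mx; rewrite expr0n add0r.
by rewrite -dot_eq0 dot_cross_orthonormal ?oner_eq0.
Qed.

Lemma pair_of_frameK M : SO3 R M -> frame_of_pair (pair_of_frame M) = M.
Proof. by move=> SO3M; rewrite /frame_of_pair /= !(quat_mxK _ _).2 frame3_cols. Qed.

Lemma pair_homotopy_noncommuting t p : 0 <= t <= 1 -> noncommuting p ->
  noncommuting (pair_homotopy (t, p)).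
Proof.
move=> t01 /noncommuting_pairsP[_ _ c0].
exact: quat_unit_noncommuting (cross_frame_path_neq0 c0 t01).
Qed.

Lemma pair_homotopy0 p : noncommuting p -> pair_homotopy (0, p) = pair_of_frame (frame_of_pair p).
Proof.
case/noncommuting_pairsP=> _ _ c0; have [a0 _] := cross_neq0 c0.
rewrite /pair_homotopy /pair_of_frame /frame_of_pair /frame3 /=.
set u := normalize (quat_im p.1); set w := normalize (cross _ _).
have [-> -> _] := mx_col3_of_cols u (cross w u) w.
have uu : dot u u = 1 by apply: dot_normalize.
have ww : dot w w = 1 by apply: dot_normalize.
have wu : dot w u = 0 by rewrite /w /u /normalize dotZl dotZr dotC dot_crossl !mulr0.
rewrite !mul0r !scale0r subr0 !scale1r !add0r !quat_unit_id ?expr0n ?add0r //.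
exact: dot_cross_orthonormal.
Qed.

Lemma pair_homotopy1 p : noncommuting p -> pair_homotopy (1, p) = p.
Proof.
case/noncommuting_pairsP=> /SU2_quatP[E1 n1] /SU2_quatP[E2 n2] _.
rewrite /pair_homotopy /= subrr !scale0r !addr0 !scale1r !mul1r !quat_unit_id //.
by rewrite -E1 -E2; case: p {E1 E2 n1 n2}.
Qed.

Lemma frame_of_pair_continuous p : noncommuting p -> {for p, continuous frame_of_pair}.
Proof.
case/noncommuting_pairsP=> _ _.
exact: cvg_frame3 (continuous_comp (@continuous_fst _ _ p) (@continuous_quat_im R _))
  (continuous_comp (@continuous_snd _ _ p) (@continuous_quat_im R _)).
Qed.

Lemma pair_of_frame_continuous : continuous pair_of_frame.
Proof.
move=> M; have col j : {for M, continuous (fun N : 'M[R]_3 => mx_col3 N j)}.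
  by apply/cvg_vec3P; split; apply: continuous_mx_entry.
have quat_col j : {for M, continuous (fun N : 'M[R]_3 => quat_mx 0 (mx_col3 N j))}.
  exact: cvg_quat_mx (cvg_cst (0 : R)) (col j).
exact: cvg_pair (quat_col 0) (quat_col 1).
Qed.

Lemma pair_homotopy_continuous t p : 0 <= t <= 1 -> noncommuting p ->
  {for (t, p), continuous pair_homotopy}.
Proof.
move=> t01 /noncommuting_pairsP[_ _ c0]; have [a0 _] := cross_neq0 c0.
have [x0 y0] := cross_neq0 (cross_frame_path_neq0 c0 t01).
pose q := (t, p).
have ct : {for q, continuous (fun q : R * X => q.1)} := @continuous_fst _ _ q.
have c1t : {for q, continuous (fun q : R * X => 1 - q.1)} by exact: cvgB (cvg_cst (1 : R)) ct.
have c1 : {for q, continuous (fun q : R * X => q.2.1)}.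
  exact: continuous_comp (@continuous_snd _ _ q) (@continuous_fst _ _ _).
have c2 : {for q, continuous (fun q : R * X => q.2.2)}.
  exact: continuous_comp (@continuous_snd _ _ q) (@continuous_snd _ _ _).
have ca := continuous_comp c1 (@continuous_quat_im R _).
have cb := continuous_comp c2 (@continuous_quat_im R _).
have cu := cvg_normalize ca a0; have cw := cvg_normalize (cvg_cross ca cb) c0.
have re1 := continuous_comp c1 (@continuous_quat_re R _).
have re2 := continuous_comp c2 (@continuous_quat_re R _).
have h1 : {for q, continuous (fun q => (pair_homotopy q).1)}.
  exact: cvg_quat_unit (cvgM ct re1) (cvgD (cvgZ ct ca) (cvgZ c1t cu)) x0.
have h2 : {for q, continuous (fun q => (pair_homotopy q).2)}.
  exact: cvg_quat_unit (cvgM ct re2) (cvgD (cvgZ ct cb) (cvgZ c1t (cvg_cross cw cu))) y0.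
exact: cvg_pair h1 h2.
Qed.

End HomotopyEquivalence.

Theorem mainTheorem13 (R : realType) :
  homotopy_equivalent R (@SU2xSU2 R `\` @HomZ2SU2 R) (@SO3 R).
Proof.
exists (@frame_of_pair R), (@pair_of_frame R); split.
- by apply: continuous_in_subspaceT => p; rewrite inE; apply: frame_of_pair_continuous.
- by move=> _ [p Dp <-]; apply: frame_of_pair_SO3.
- exact: continuous_subspaceT (@pair_of_frame_continuous R).
- by move=> _ [M SO3M <-]; apply: pair_of_frame_noncommuting.
split.
- exists (@pair_homotopy R); split.
  + apply: continuous_in_subspaceT => -[t p]; rewrite inE => -[/= t01 Dp].
    by apply: pair_homotopy_continuous; rewrite // -in_itv.
  + by move=> t p t01 Dp; apply: pair_homotopy_noncommuting; rewrite // -in_itv.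
  + by move=> p Dp; rewrite pair_homotopy0.
  + by move=> p Dp; rewrite pair_homotopy1.
- exists (fun tp : R * 'M[R]_3 => tp.2); split => //.
  + by apply: continuous_subspaceT => tp; apply: continuous_snd.
  + by move=> M SO3M /=; rewrite pair_of_frameK.
Qed.
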